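(* Let $G$ be a finite connected multigraph and $D\in\operatorname{Div}(G)$. Then the limit $\lim_{\ell\to\infty} r(\ell D)/\ell$ exists (and hence equals $\operatorname{vol}^{\mathbb{T}}_G(D)$).
   Context: A multigraph allows loops and multiple edges; $G$ is finite and connected. $\operatorname{Div}(G)=\bigoplus_{v\in V(G)}\mathbb{Z}v$. For $f:V(G)\to\mathbb{Z}$, $\operatorname{div}(f)=\sum_v\big(\sum_{e\text{ non-loop edge joining }v\text{ to }w}(f(v)-f(w))\big)v$; $D\sim D'$ iff $D-D'$ is principal. $|D|=\{D'\ge 0: D'\sim D\}$. Baker--Norine rank: $r(D)=-1$ if $|D|=\varnothing$, otherwise $r(D)=\max\{d: |D-E|\ne\varnothing\ \forall E\ge 0,\ \deg E=d\}$. The tropical volume is $\operatorname{vol}^{\mathbb{T}}_G(D)=\limsup_{\ell\to\infty} r(\ell D)/\ell$. *)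

From HB Require Import structures.
From mathcomp Require Import all_boot all_order all_algebra.
From mathcomp Require Import boolp.
Set Implicit Arguments. Unset Strict Implicit. Unset Printing Implicit Defensive.
Import Order.TTheory GRing.Theory Num.Theory.
Local Open Scope ring_scope.

(* A finite multigraph: finite vertex and edge types; each edge has two
   (possibly equal) endpoints.  Loops and parallel edges are allowed. *)
Record multigraph := MultiGraph {
  vert : finType;
  edge : finType;
  ends : edge -> vert * vert }.

Section Divisors.
Variable G : multigraph.

Definition adjacent : rel (vert G) :=
  fun v w => [exists e : edge G, (ends e == (v, w)) || (ends e == (w, v))].

Definition connected_graph : Prop := forall v w : vert G, connect adjacent v w.

Definition divisor := {ffun vert G -> int}.

Definition deg (D : divisor) : int := \sum_(v : vert G) D v.

Definition effective (D : divisor) : Prop := forall v, 0 <= D v.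

Definition div_of (f : vert G -> int) : divisor :=
  [ffun v => \sum_(e : edge G)
     (if (ends e).1 != (ends e).2 then
        (if (ends e).1 == v then f v - f (ends e).2
         else if (ends e).2 == v then f v - f (ends e).1 else 0)
      else 0)].

Definition principal (D : divisor) : Prop := exists f, D = div_of f.

Definition lin_equiv (D D' : divisor) : Prop := principal (D - D').

Definition linsys_nonempty (D : divisor) : Prop :=
  exists D', effective D' /\ lin_equiv D' D.

Definition rank_ge (D : divisor) (d : nat) : Prop :=
  forall E : divisor, effective E -> deg E = d%:Z -> linsys_nonempty (D - E).

(* Baker--Norine rank: max of {d | rank_ge D d}, and -1 when |D| is empty
   (in which case rank_ge D 0 fails, so no such maximum exists). *)
Definition rank (D : divisor) : int :=
  match pselect (exists d : nat, rank_ge D d /\ forall d', rank_ge D d' -> (d' <= d)%N) with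
  | left H => (proj1_sig (cid H))%:Z
  | right _ => -1
  end.

End Divisors.

(* The rank satisfies deg D - C <= r(D) <= max (deg D) 0 for a constant C that depends only
   on G, so r(l D) / l tends to max (deg D) 0.  The upper bound is immediate from the
   definition of the rank.  For the lower bound: on a connected graph harmonic functions are
   constant (maximum principle), so the rational Laplacian maps onto the vectors with
   coordinate sum zero; clearing denominators, some positive multiple m_v (v - v0) of every
   vertex difference is principal.  Reducing D modulo these multiples gives an equivalent
   divisor whose value at each v <> v0 lies in [0, m_v), so whose value at v0 is at least
   deg D - sum_v m_v; it is effective as soon as deg D >= sum_v m_v. *)

From Pilot Require Import Defs.
From HB Require Import structures.
From mathcomp Require Import all_boot all_order all_algebra.
From mathcomp Require Import all_classical all_reals all_analysis.
From mathcomp Require Import Rstruct Rstruct_topology.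
From mathcomp Require Import zify.
Import Order.TTheory GRing.Theory Num.Theory.
Set Implicit Arguments. Unset Strict Implicit. Unset Printing Implicit Defensive.
Local Open Scope ring_scope.

Section Laplacian.
Variable G : multigraph.
Local Notation V := (vert G).

Definition laplacian (R : zmodType) (g : V -> R) (v : V) : R :=
  \sum_(e : edge G) (if (ends e).1 != (ends e).2 then
        (if (ends e).1 == v then g v - g (ends e).2
         else if (ends e).2 == v then g v - g (ends e).1 else 0)
      else 0).

Lemma div_ofE (f : V -> int) v : div_of f v = laplacian f v.
Proof. by rewrite ffunE. Qed.

Lemma eq_laplacian (R : zmodType) (g h : V -> R) : g =1 h -> laplacian g =1 laplacian h.
Proof. by move=> gh v; apply: eq_bigr => e _; rewrite !gh. Qed.

Lemma sum_laplacian (R : zmodType) (g : V -> R) : \sum_v laplacian g v = 0.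
Proof.
rewrite exchange_big /= big1 // => e _.
have [ne|/negPn eq] := boolP ((ends e).1 != (ends e).2); last first.
  by rewrite big1 // => v _; rewrite eq.
rewrite (bigD1 (ends e).1) //= eqxx (bigD1 (ends e).2) /=; last by rewrite eq_sym.
rewrite (negbTE ne) eqxx big1 ?addr0 ?addrA ?subrK ?subrr //.
by move=> v /andP[v1 v2]; rewrite eq_sym (negbTE v1) eq_sym (negbTE v2).
Qed.

Lemma laplacianD (R : zmodType) (f g : V -> R) v :
  laplacian (fun w => f w + g w) v = laplacian f v + laplacian g v.
Proof.
rewrite -big_split; apply: eq_bigr => e _ /=.
by do !case: ifP => _; rewrite ?addr0 // opprD addrACA.
Qed.

Lemma laplacianN (R : zmodType) (f : V -> R) v :
  laplacian (fun w => - f w) v = - laplacian f v.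
Proof.
rewrite -sumrN; apply: eq_bigr => e _ /=.
by do !case: ifP => _; rewrite ?oppr0 // opprD.
Qed.

Lemma laplacianMl (R : pzRingType) (c : R) (f : V -> R) v :
  laplacian (fun w => c * f w) v = c * laplacian f v.
Proof.
rewrite mulr_sumr; apply: eq_bigr => e _ /=.
by do !case: ifP => _; rewrite ?mulr0 // mulrBr.
Qed.

Lemma intr_laplacian (R : pzRingType) (f : V -> int) v :
  (laplacian f v)%:~R = laplacian (fun w => (f w)%:~R : R) v.
Proof.
rewrite raddf_sum; apply: eq_bigr => e _ /=.
by do !case: ifP => _; rewrite ?intrB.
Qed.

End Laplacian.

Section Principal.
Variable G : multigraph.
Local Notation V := (vert G).

Lemma principal0 : principal (0 : divisor G).
Proof.
exists (fun _ => 0); apply/ffunP => v; rewrite !ffunE big1 // => e _.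
by do !case: ifP => _; rewrite ?subrr.
Qed.

Lemma principalD (A B : divisor G) : principal A -> principal B -> principal (A + B).
Proof.
move=> [f ->] [g ->]; exists (fun w => f w + g w).
by apply/ffunP => v; rewrite ffunE !div_ofE laplacianD.
Qed.

Lemma principalN (A : divisor G) : principal A -> principal (- A).
Proof.
move=> [f ->]; exists (fun w => - f w).
by apply/ffunP => v; rewrite ffunE !div_ofE laplacianN.
Qed.

Lemma principalMz (c : int) (A : divisor G) : principal A -> principal (A *~ c).
Proof.
move=> [f ->]; exists (fun w => c * f w).
by apply/ffunP => v; rewrite ffunMzE !div_ofE laplacianMl mulrzz mulrC.
Qed.

Lemma principal_sum (I : finType) (P : pred I) (F : I -> divisor G) :
  (forall i, P i -> principal (F i)) -> principal (\sum_(i | P i) F i).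
Proof. by move=> PF; apply: big_ind => //; [apply: principal0|apply: principalD]. Qed.

Lemma degD (A B : divisor G) : deg (A + B) = deg A + deg B.
Proof. by rewrite /deg -big_split; apply: eq_bigr => v _; rewrite !ffunE. Qed.

Lemma degN (A : divisor G) : deg (- A) = - deg A.
Proof. by rewrite /deg -sumrN; apply: eq_bigr => v _; rewrite !ffunE. Qed.

Lemma degB (A B : divisor G) : deg (A - B) = deg A - deg B.
Proof. by rewrite degD degN. Qed.

Lemma degMn (A : divisor G) (l : nat) : deg (A *+ l) = deg A * l%:Z.
Proof.
rewrite /deg; under eq_bigr do rewrite ffunMnE.
by rewrite sumrMnl pmulrn mulrzz.
Qed.

Lemma deg_ge0 (A : divisor G) : effective A -> 0 <= deg A.
Proof. by move=> A_ge0; rewrite sumr_ge0. Qed.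

Lemma deg_principal (A : divisor G) : principal A -> deg A = 0.
Proof.
by move=> [f ->]; rewrite /deg; under eq_bigr do rewrite div_ofE; apply: sum_laplacian.
Qed.

End Principal.

Section Harmonic.
Variables (G : multigraph) (R : realDomainType).
Hypothesis HG : connected_graph G.
Local Notation V := (vert G).

Lemma laplacian_max_adjacent (g : V -> R) (w w' : V) :
  (forall u, g u <= g w) -> laplacian g w = 0 -> Defs.adjacent w w' -> g w' = g w.
Proof.
move=> gmax lap0 /existsP[e we].
have [->|w'w] := eqVneq w' w; first by [].
pose term e := if (ends e).1 != (ends e).2 then
    (if (ends e).1 == w then g w - g (ends e).2
     else if (ends e).2 == w then g w - g (ends e).1 else 0)
  else 0.
have term_ge0 e' : true -> 0 <= term e'.
  by move=> _; rewrite /term; do !case: ifP => _; rewrite ?subr_ge0.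
have /eqP := psumr_eq0P term_ge0 lap0 (i := e) isT.
rewrite /term; case/orP: we => /eqP -> /=.
  by rewrite (eq_sym w) w'w eqxx subr_eq0 => /eqP.
by rewrite w'w (negbTE w'w) eqxx subr_eq0 => /eqP.
Qed.

Lemma laplacian_eq0_const (g : V -> R) :
  (forall v, laplacian g v = 0) -> forall v w, g v = g w.
Proof.
move=> lap0 v.
have [u _ gmax] := @arg_maxP _ _ _ v predT g isT.
have {}gmax z : g z <= g u by apply: gmax.
suff gu w : g w = g u by move=> w; rewrite !gu.
have /connectP[p p_path ->] := HG u w.
elim: p u gmax p_path => [|x p IHp] y //= ymax /andP[yx p_path].
have gxy : g x = g y := laplacian_max_adjacent ymax (lap0 y) yx.
by rewrite -gxy; apply: IHp p_path => z; rewrite gxy; apply: ymax.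
Qed.

End Harmonic.

Section LaplacianOnto.
Variables (G : multigraph) (F : realFieldType).
Hypothesis HG : connected_graph G.
Local Notation V := (vert G).
Local Notation fV := {ffun V -> F^o}.

Definition laplacian_ffun (g : fV) : fV := [ffun v => laplacian g v].

Lemma laplacian_ffun_is_linear : linear laplacian_ffun.
Proof.
move=> a g h; apply/ffunP => v; rewrite !ffunE.
rewrite (@eq_laplacian _ _ _ (fun w => a * g w + h w)); last by move=> w; rewrite !ffunE.
by rewrite laplacianD laplacianMl.
Qed.

HB.instance Definition _ := GRing.isLinear.Build F fV fV _ laplacian_ffun
  laplacian_ffun_is_linear.

Local Notation lap := (linfun laplacian_ffun).

Lemma sum_laplacian_ffun (g : fV) : \sum_v lap g v = 0.
Proof. by rewrite lfunE; under eq_bigr do rewrite ffunE; apply: sum_laplacian. Qed.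

Lemma dim_lker_laplacian : (\dim (lker lap) <= 1)%N.
Proof.
case: (pickP (@predT V)) => [v0 _|V0]; last first.
  suff -> : lker lap = 0%VS by rewrite dimv0.
  apply/vspaceP => g; rewrite memv0 memv_ker; apply/idP/idP => /eqP _;
  by apply/eqP/ffunP => v; have := V0 v.
pose one : fV := [ffun => 1].
suff kerS : (lker lap <= <[one]>)%VS.
  by apply: leq_trans (dimvS kerS) _; rewrite dim_vline leq_b1.
apply/subvP => g; rewrite memv_ker lfunE => /eqP lap0; apply/vlineP; exists (g v0).
apply/ffunP => w; rewrite !ffunE -[RHS]/(g v0 * 1 : F) mulr1.
apply: (laplacian_eq0_const HG) => v.
by have := congr1 (fun h : fV => h v) lap0; rewrite !ffunE.
Qed.

Lemma laplacian_onto (x : V -> F) :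
  \sum_v x v = 0 -> exists g : V -> F, forall v, laplacian g v = x v.
Proof.
move=> x0; case: (pickP (@predT V)) => [v0 _|V0]; last by exists x => v; have := V0 v.
(* The image has codimension at most one and, having coordinate sum zero, misses the
   indicator e0 of v0; hence image + <[e0]> is the whole space. *)
pose e0 : fV := [ffun w => (w == v0)%:R].
have sum_e0 c : \sum_w (c *: e0) w = c.
  rewrite (bigD1 v0) //= big1 => [|w /negbTE wv0]; rewrite !ffunE ?eqxx ?wv0.
    by rewrite addr0 -[RHS]mulr1.
  exact: (mulr0 c).
have e0_neq0 : e0 != 0.
  by apply/negP => /eqP/ffunP/(_ v0); rewrite !ffunE eqxx; apply/eqP; rewrite oner_eq0.
have lap_cap_e0 : (limg lap :&: <[e0]> = 0)%VS.
  apply/eqP; rewrite -subv0; apply/subvP => y.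
  rewrite memv_cap memv0 => /andP[/memv_imgP[g _ ->] /vlineP[c yE]].
  by rewrite yE -(sum_e0 c) -yE sum_laplacian_ffun scale0r.
have lap_add_e0 : (limg lap + <[e0]>)%VS = fullv.
  apply/eqP; rewrite eqEdim subvf (dimv_disjoint_sum lap_cap_e0) dim_vline e0_neq0 /=.
  have := limg_ker_dim lap fullv; rewrite capfv => <-.
  by rewrite addnC leq_add2l dim_lker_laplacian.
pose xf : fV := [ffun v => x v].
have : xf \in (limg lap + <[e0]>)%VS by rewrite lap_add_e0 memvf.
case/memv_addP => _ /memv_imgP[g _ ->] [_ /vlineP[c ->] xfE].
have c0 : c = 0.
  have := congr1 (fun h : fV => \sum_v h v) xfE.
  under eq_bigr do rewrite ffunE.
  rewrite x0 /=; under eq_bigr do rewrite ffunE.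
  by rewrite big_split /= sum_laplacian_ffun sum_e0 add0r.
exists g => v; have := congr1 (fun h : fV => h v) xfE.
by rewrite c0 scale0r addr0 lfunE !ffunE.
Qed.

End LaplacianOnto.

Section Riemann.
Variable G : multigraph.
Hypothesis HG : connected_graph G.
Local Notation V := (vert G).

Lemma principal_Mz_deg0 (A : divisor G) :
  deg A = 0 -> exists2 m : int, 0 < m & principal (A *~ m).
Proof.
move=> degA0.
have /(laplacian_onto HG)[g gE] : \sum_v ((A v)%:~R : rat) = 0.
  by rewrite -rmorph_sum /= -/(deg A) degA0.
pose m : int := \prod_w denq (g w).
pose h (w : V) : int := numq (g w) * \prod_(w' | w' != w) denq (g w').
have hE w : (h w)%:~R = m%:~R * g w.
  by rewrite /h /m [in RHS](bigD1 w) //= !intrM numqE [RHS]mulrC [RHS]mulrA.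
exists m; first by apply: prodr_gt0 => w _; apply: denq_gt0.
exists h; apply/ffunP => v; apply: (@intr_inj rat).
rewrite ffunMzE div_ofE intr_laplacian (eq_laplacian hE) laplacianMl gE.
by rewrite mulrzz intrM mulrC.
Qed.

Definition vdiff (v w : V) : divisor G := [ffun u => (u == v)%:Z - (u == w)%:Z].

Lemma deg_vdiff v w : deg (vdiff v w) = 0.
Proof.
have sum_ind a : \sum_u ((u == a)%:Z) = 1.
  by rewrite (bigD1 a) //= eqxx big1 ?addr0 // => u /negbTE ->.
by rewrite /deg; under eq_bigr do rewrite ffunE; rewrite sumrB !sum_ind subrr.
Qed.

Variable v0 : V.

Lemma linsys_nonempty_deg_ge :
  exists2 C : int, 0 <= C & forall D : divisor G, C <= deg D -> linsys_nonempty D.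
Proof.
have m_ex v : exists m : int, 0 < m /\ principal (vdiff v v0 *~ m).
  by have [m m_gt0 Pm] := principal_Mz_deg0 (deg_vdiff v v0); exists m.
have [m m_spec] := choice m_ex.
exists (\sum_v m v) => [|D degD].
  by apply: sumr_ge0 => v _; case: (m_spec v) => /ltW.
pose S : divisor G := \sum_(w | w != v0) vdiff w v0 *~ m w *~ (D w %/ m w)%Z.
have PS : principal S.
  by apply: principal_sum => w _; apply/principalMz; case: (m_spec w).
pose R : divisor G := D - S.
have R_off u : u != v0 -> R u = (D u %% m u)%Z.
  move=> uv0; rewrite !ffunE sum_ffunE (bigD1 u) //= big1 => [|w /andP[_ wu]].
    rewrite !ffunMzE !ffunE eqxx (negbTE uv0) addr0 !mulrzz.
    have := divz_eq (D u) (m u); lia.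
  by rewrite !ffunMzE !ffunE (negbTE uv0) eq_sym (negbTE wu) subrr !mulrzz !mul0r.
have degR : deg R = deg D by rewrite degB (deg_principal PS) subr0.
exists R; split; last first.
  rewrite /lin_equiv (_ : R - D = - S); first exact: principalN.
  by rewrite /R addrAC subrr add0r.
move=> u; have [->|uv0] := eqVneq u v0; last first.
  by rewrite R_off //; apply: modz_ge0; case: (m_spec u) => /lt0r_neq0.
have R_le : \sum_(u | u != v0) R u <= \sum_(u | u != v0) m u.
  apply: ler_sum => w wv0; rewrite R_off //; apply: ltW; apply: ltz_pmod.
  by case: (m_spec w).
have degR_split : R v0 + \sum_(w | w != v0) R w = deg D.
  by rewrite -degR /deg [in RHS](bigD1 v0).
have m_split : \sum_v m v = m v0 + \sum_(w | w != v0) m w by rewrite (bigD1 v0).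
have [m0_gt0 _] := m_spec v0; lia.
Qed.

End Riemann.

Section Rank.
Variable G : multigraph.
Local Notation V := (vert G).

Lemma rank_ge_N1 (D : divisor G) : -1 <= rank D.
Proof. by rewrite /rank; case: pselect. Qed.

Lemma rank_empty (D : divisor G) : (V -> False) -> rank D = -1.
Proof.
move=> V0; rewrite /rank; case: pselect => [H|//]; exfalso.
case: (cid H) => d [_ dmax].
have /dmax : rank_ge D d.+1 by move=> E _; rewrite /deg big1 // => v; case: (V0 v).
by rewrite ltnn.
Qed.

Variable v0 : V.

Lemma rank_ge_deg (D : divisor G) (d : nat) : rank_ge D d -> d%:Z <= deg D.
Proof.
move=> Dd; pose E : divisor G := [ffun u => if u == v0 then d%:Z else 0].
have E_ge0 : effective E by move=> u; rewrite ffunE; case: ifP.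
have degE : deg E = d%:Z.
  rewrite /deg (bigD1 v0) //= big1 ?ffunE ?eqxx ?addr0 // => u /negbTE uv0.
  by rewrite ffunE uv0.
have [D' [D'_ge0 /deg_principal]] := Dd E E_ge0 degE.
by rewrite !degB degE; have := deg_ge0 D'_ge0; lia.
Qed.

Lemma le_rank (D : divisor G) (k : nat) : rank_ge D k -> k%:Z <= rank D.
Proof.
move=> Dk; rewrite /rank; case: pselect => [H|].
  by case: (cid H) => d /= [_ /(_ k Dk)]; lia.
case; pose P d := `[< rank_ge D d >].
have exP : exists d, P d by exists k; apply/asboolP.
have ubP d : P d -> (d <= `|deg D|)%N by move/asboolP/rank_ge_deg; lia.
have [d /asboolP Dd dmax] := ex_maxnP exP ubP.
by exists d; split => // d' /asboolP /dmax.
Qed.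

Lemma rank_le_deg (D : divisor G) : 0 <= rank D -> rank D <= deg D.
Proof.
rewrite /rank; case: pselect => [H _|_]; last by [].
by case: (cid H) => d /= [/rank_ge_deg].
Qed.

End Rank.

Lemma rank_deg_bounds (G : multigraph) : connected_graph G ->
  exists2 C : int, 0 <= C & forall D : divisor G,
    deg D - C <= rank D /\ (0 <= rank D -> rank D <= deg D).
Proof.
move=> HG; case: (pickP (@predT (vert G))) => [v0 _|V0]; last first.
  exists 1 => // D; rewrite rank_empty => [|v]; last by have := V0 v.
  by rewrite /deg big1 // => v; have := V0 v.
have [C C_ge0 HC] := linsys_nonempty_deg_ge HG v0.
exists C => // D; split; last exact: rank_le_deg.
have [CD|] := lerP C (deg D); last by have := rank_ge_N1 D; lia.
have : rank_ge D `|deg D - C|%N by move=> E _ degE; apply: HC; rewrite degB degE; lia.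
by move/(le_rank v0); lia.
Qed.

Section Limit.
Import numFieldNormedType.Exports.
Local Open Scope classical_set_scope.

Lemma cvg_div_linear_bounds (R : realType) (r : nat -> int) (L C : int) :
  (forall l : nat, l%:Z * L - C <= r l <= l%:Z * L) ->
  (fun l : nat => ((r l)%:~R / l%:R : R)) @ \oo --> (L%:~R : R).
Proof.
move=> rLC; apply/(@cvgrPdist_le _ _ _ (nbhs \oo)) => e e_gt0.
exists (Num.truncn ((C%:~R : R) / e)).+1 => // l /= Nl.
have l_gt0 : (0 : R) < l%:R by rewrite ltr0n; lia.
have [err_ge0 err_leC] : 0 <= L * l%:Z - r l /\ L * l%:Z - r l <= C by have := rLC l; lia.
have -> : (L%:~R - (r l)%:~R / l%:R : R) = ((L * l%:Z - r l)%:~R : R) / l%:R.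
  by rewrite intrB intrM mulrBl mulfK // lt0r_neq0.
rewrite ger0_norm; last by rewrite divr_ge0 ?ler0z // ltW.
rewrite ler_pdivrMr // (le_trans (_ : _ <= C%:~R)) ?ler_int // mulrC -ler_pdivrMr //.
by rewrite ltW // (lt_le_trans (truncnS_gt _)) // ler_nat.
Qed.

End Limit.

Local Open Scope classical_set_scope.

Theorem mainTheorem4 (G : multigraph) (HG : connected_graph G) (D : divisor G) :
  exists L : Rdefinitions.R,
    (fun l : nat => ((rank (D *+ l))%:~R / l%:R : Rdefinitions.R)) @ \oo --> L.
Proof.
have [C C_ge0 HC] := rank_deg_bounds HG.
have [L [L_ge0 DL]] : exists L : int, 0 <= L /\ (deg D = L \/ deg D < 0 /\ L = 0).
  by case: (lerP 0 (deg D)) => D_sgn; [exists (deg D) | exists 0]; lia.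
exists L%:~R; apply: (cvg_div_linear_bounds (C := C + 1)) => l.
have [lower upper] := HC (D *+ l); have := rank_ge_N1 (D *+ l).
rewrite degMn in lower upper; case: (lerP 0 (rank (D *+ l))) => [/upper|];
by case: DL => [DL | [D_lt0 ->]]; nia.
Qed.
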